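(* Let $G$ be a finitely generated nilpotent group and $\Phi$ a uniformly continuous action of $G$ on a metric space $\Omega$; let $U,V\subset\Omega$. Assume there exists $g\in G$ such that the homeomorphism $f_g=\Phi(g,\cdot)$ is topologically Anosov with respect to $(U,V)$. Then the action $\Phi$ is topologically Anosov with respect to $(U,V)$.
   Context: Let $(\Omega,\mathrm{dist})$ be a metric space; $B(\delta,x)=\{y:\mathrm{dist}(x,y)<\delta\}$ and $B(\delta,U)=\bigcup_{x\in U}B(\delta,x)$. An action of a group $G$ is a map $\Phi:G\times\Omega\to\Omega$ such that each $f_g=\Phi(g,\cdot)$ is a homeomorphism of $\Omega$, $\Phi(e,x)=x$, and $\Phi(g_1g_2,x)=\Phi(g_1,\Phi(g_2,x))$. For a finitely generated $G$, the action is uniformly continuous if for some finite symmetric generating set $S$ (symmetric: $s\in S\Rightarrow s^{-1}\in S$) all maps $f_s$, $s\in S$, are uniformly continuous. Fix a finite symmetric generating set $S$ of $G$. For $d>0$, a family $\{y_g\}_{g\in G}\subset\Omega$ is a $d$-pseudotrajectory if $\mathrm{dist}(y_{sg},f_s(y_g))<d$ for all $s\in S$, $g\in G$. A uniformly continuous action has the shadowing property on $V\subset\Omega$ if for every $\varepsilon>0$ there is $d>0$ such that for every $d$-pseudotrajectory $\{y_g\}$ with all $y_g\in V$ there is $x_e\in\Omega$ with $\mathrm{dist}(y_g,f_g(x_e))<\varepsilon$ for all $g\in G$ (this property does not depend on the choice of $S$). The action is expansive on $U\subset\Omega$ if there is $\Delta>0$ such that whenever $x_1,x_2\in U$ satisfy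 $\Phi(g,x_1),\Phi(g,x_2)\in U$ and $\mathrm{dist}(\Phi(g,x_1),\Phi(g,x_2))<\Delta$ for all $g\in G$, then $x_1=x_2$. The action is topologically Anosov with respect to $(U,V)$ if (TA1) there is $\gamma>0$ with $B(\gamma,V)\subset U$, (TA2) it has the shadowing property on $V$, and (TA3) it is expansive on $U$. A homeomorphism $f$ of $\Omega$ is said to have any of these properties if the $\mathbb Z$-action $(k,x)\mapsto f^k(x)$ (with generating set $\{1,-1\}$) has it. A group $G$ is nilpotent of class $n$ if its lower central series $G_1=G$, $G_{i+1}=[G_i,G]$ satisfies $G_{n+1}=\{e\}$ and $G_n\neq\{e\}$; here $[g,h]=ghg^{-1}h^{-1}$. *)

From Stdlib Require Import Reals List ZArith Lia.
Import ListNotations.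
Set Implicit Arguments.
Open Scope R_scope.

Record Group := {
  carrier :> Type;
  gmul : carrier -> carrier -> carrier;
  gone : carrier;
  ginv : carrier -> carrier;
  gmul_assoc : forall a b c, gmul a (gmul b c) = gmul (gmul a b) c;
  gmul_1l : forall a, gmul gone a = a;
  gmul_1r : forall a, gmul a gone = a;
  gmul_Vl : forall a, gmul (ginv a) a = gone;
  gmul_Vr : forall a, gmul a (ginv a) = gone }.

Arguments gmul {g}.
Arguments gone {g}.
Arguments ginv {g}.

Section GroupDefs.
Variable G : Group.

Definition comm (g h : G) : G := gmul (gmul (gmul g h) (ginv g)) (ginv h).

Inductive gen_sub (A : G -> Prop) : G -> Prop :=
| gs_in : forall x, A x -> gen_sub A x
| gs_one : gen_sub A gone
| gs_mul : forall x y, gen_sub A x -> gen_sub A y -> gen_sub A (gmul x y)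
| gs_inv : forall x, gen_sub A x -> gen_sub A (ginv x).

(** lower central series, shifted: lcs n = G_{n+1}
    (lcs 0 = G_1 = G, lcs (n+1) = [lcs n, G]) *)
Fixpoint lcs (n : nat) : G -> Prop :=
  match n with
  | O => fun _ => True
  | S m => gen_sub (fun c => exists a b, lcs m a /\ c = comm a b)
  end.

Definition nilpotent : Prop := exists n, forall x, lcs n x -> x = gone.

Definition symmetric_set (S : list G) : Prop :=
  forall s, In s S -> In (ginv s) S.

Definition generates (S : list G) : Prop :=
  forall g, gen_sub (fun x => In x S) g.

Definition finitely_generated : Prop := exists S : list G, generates S.

Definition npow (g : G) (n : nat) : G := Nat.iter n (gmul g) gone.
Definition gpow (g : G) (k : Z) : G :=
  match k with
  | Z0 => gone
  | Zpos p => npow g (Pos.to_nat p)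
  | Zneg p => ginv (npow g (Pos.to_nat p))
  end.
End GroupDefs.

Definition Zgroup : Group.
Proof.
  refine (@Build_Group Z Z.add 0%Z Z.opp _ _ _ _ _); intros; lia.
Defined.

Section MetricDefs.
Variable Omega : Type.
Variable dist : Omega -> Omega -> R.

Definition is_metric : Prop :=
  (forall x y, 0 <= dist x y) /\
  (forall x y, dist x y = 0 <-> x = y) /\
  (forall x y, dist x y = dist y x) /\
  (forall x y z, dist x z <= dist x y + dist y z).

Definition continuous_map (f : Omega -> Omega) : Prop :=
  forall x eps, 0 < eps -> exists delta, 0 < delta /\
    forall y, dist x y < delta -> dist (f x) (f y) < eps.

Definition unif_continuous (f : Omega -> Omega) : Prop :=
  forall eps, 0 < eps -> exists delta, 0 < delta /\
    forall x y, dist x y < delta -> dist (f x) (f y) < eps.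

Definition is_homeo (f : Omega -> Omega) : Prop :=
  exists h : Omega -> Omega,
    (forall x, h (f x) = x) /\ (forall x, f (h x) = x) /\
    continuous_map f /\ continuous_map h.

Variable G : Group.

Definition is_action (Phi : G -> Omega -> Omega) : Prop :=
  (forall g, is_homeo (Phi g)) /\
  (forall x, Phi gone x = x) /\
  (forall g1 g2 x, Phi (gmul g1 g2) x = Phi g1 (Phi g2 x)).

Definition unif_continuous_action (Phi : G -> Omega -> Omega) : Prop :=
  exists S : list G, @symmetric_set G S /\ @generates G S /\
    forall s, In s S -> unif_continuous (Phi s).

Definition pseudotrajectory (S : list G) (Phi : G -> Omega -> Omega)
  (d : R) (y : G -> Omega) : Prop :=
  forall s g, In s S -> dist (y (gmul s g)) (Phi s (y g)) < d.

Definition shadowing_on (S : list G) (Phi : G -> Omega -> Omega)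
  (V : Omega -> Prop) : Prop :=
  forall eps, 0 < eps -> exists d, 0 < d /\
    forall y : G -> Omega, pseudotrajectory S Phi d y ->
      (forall g, V (y g)) ->
      exists xe, forall g, dist (y g) (Phi g xe) < eps.

Definition expansive_on (Phi : G -> Omega -> Omega) (U : Omega -> Prop) : Prop :=
  exists Delta, 0 < Delta /\
    forall x1 x2, U x1 -> U x2 ->
      (forall g, U (Phi g x1) /\ U (Phi g x2) /\
                 dist (Phi g x1) (Phi g x2) < Delta) ->
      x1 = x2.

Definition ball_subset (gamma : R) (V U : Omega -> Prop) : Prop :=
  forall x y, V x -> dist x y < gamma -> U y.

Definition topologically_Anosov (S : list G) (Phi : G -> Omega -> Omega)
  (U V : Omega -> Prop) : Prop :=
  (exists gamma, 0 < gamma /\ ball_subset gamma V U) /\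
  shadowing_on S Phi V /\
  expansive_on Phi U.
End MetricDefs.

(** The homeomorphism f_g = Phi(g, .) is topologically Anosov: the Z-action
    k |-> f_g^k = Phi(g^k, .) with generating set {1,-1} is. *)
Definition homeo_topologically_Anosov (Omega : Type) (dist : Omega -> Omega -> R)
  (G : Group) (Phi : G -> Omega -> Omega) (g : G) (U V : Omega -> Prop) : Prop :=
  @topologically_Anosov Omega dist Zgroup [1%Z; (-1)%Z]
    (fun (k : Zgroup) x => Phi (@gpow G g k) x) U V.

(** Condition (TA1) does not involve the
  action, and expansivity of k |-> f_g^k on U implies expansivity of the whole action, because
  every Z-orbit is part of a G-orbit.  The substance is shadowing.

  Let {y_h} be a fine pseudotrajectory of the G-action.  Each map f_a moves points close to y_w
  to points close to y_{aw} (the tracking property, proved along words in the generators), so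
  for every h the sequence k |-> y_{g^k h} is a pseudotrajectory of f_g and is shadowed by some
  point x(h).  Expansivity of f_g makes such a shadowing point unique; hence x(gh) = f_g(x(h)).
  If x is also equivariant for the commutator [c,g], then h |-> f_c^{-1}(x(ch)) is a second
  g-equivariant family shadowing the same sequences, so it equals x and x is c-equivariant.
  Since the iterated commutator [..[s,g],..,g] (n times) lies in G_{n+1} = {e}, descending this
  chain makes x equivariant for every generator s, hence for all of G, and x(e) shadows {y_h}. *)

From Stdlib Require Import Reals List ZArith Lia Lra ClassicalEpsilon.
Import ListNotations.
Open Scope R_scope.

Section GroupFacts.
Variable G : Group.
Implicit Types a b c g h s : G.

Lemma mul_cancel_l a b : gmul (ginv a) (gmul a b) = b.
Proof. rewrite gmul_assoc, gmul_Vl, gmul_1l. reflexivity. Qed.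

Lemma mul_cancel_r a b : gmul a (gmul (ginv a) b) = b.
Proof. rewrite gmul_assoc, gmul_Vr, gmul_1l. reflexivity. Qed.

Lemma inv_unique a b : gmul a b = gone -> b = ginv a.
Proof. intro H. rewrite <- (mul_cancel_l a b), H, gmul_1r. reflexivity. Qed.

Lemma inv_mul a b : ginv (gmul a b) = gmul (ginv b) (ginv a).
Proof.
  symmetry. apply inv_unique.
  rewrite <- !gmul_assoc, mul_cancel_r, gmul_Vr. reflexivity.
Qed.

Lemma inv_one : ginv (@gone G) = gone.
Proof. symmetry. apply inv_unique, gmul_1l. Qed.

Lemma inv_inv a : ginv (ginv a) = a.
Proof. symmetry. apply inv_unique, gmul_Vl. Qed.

(** For a symmetric generating list, the generated subgroup is the generated submonoid: a
    property containing the generators and closed under products holds on all of it. *)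
Lemma gen_sub_symmetric_ind (S : list G) (P : G -> Prop) :
  symmetric_set G S -> P gone -> (forall a b, P a -> P b -> P (gmul a b)) ->
  (forall s, In s S -> P s) -> forall x, gen_sub G (fun x => In x S) x -> P x.
Proof.
  intros Hsym Hone Hmul HS x Hx.
  enough (P x /\ P (ginv x)) by tauto.
  induction Hx as [x Hx | | x y _ [Px Px'] _ [Py Py'] | x _ [Px Px']].
  - auto.
  - rewrite inv_one. auto.
  - rewrite inv_mul. auto.
  - rewrite inv_inv. auto.
Qed.

Lemma npow_comm g n : gmul (npow G g n) g = gmul g (npow G g n).
Proof.
  induction n as [|n IH]; simpl.
  - rewrite gmul_1l, gmul_1r. reflexivity.
  - rewrite <- gmul_assoc, IH. reflexivity.
Qed.

Lemma gpow_succ g k : gpow G g (Z.succ k) = gmul g (gpow G g k).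
Proof.
  destruct k as [|p|p]; simpl.
  - reflexivity.
  - rewrite Pos.add_1_r, Pos2Nat.inj_succ. reflexivity.
  - destruct (Pos.succ_pred_or p) as [->|Hp].
    + simpl. rewrite gmul_1r, gmul_Vr. reflexivity.
    + rewrite <- Hp. set (q := Pos.pred p).
      change (Z.pos_sub 1 (Pos.succ q)) with (Z.pos 1 + Z.neg (Pos.succ q))%Z.
      replace (Z.pos 1 + Z.neg (Pos.succ q))%Z with (Z.neg q) by lia.
      simpl. rewrite Pos2Nat.inj_succ. simpl.
      rewrite <- npow_comm, inv_mul, mul_cancel_r. reflexivity.
Qed.

Lemma gpow_pred g k : gpow G g (Z.pred k) = gmul (ginv g) (gpow G g k).
Proof. rewrite <- (Z.succ_pred k) at 2. rewrite gpow_succ, mul_cancel_l. reflexivity. Qed.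

Lemma gpow_comm g k : gmul (gpow G g k) g = gmul g (gpow G g k).
Proof.
  induction k as [|k IH|k IH] using Z.peano_ind.
  - simpl. rewrite gmul_1l, gmul_1r. reflexivity.
  - rewrite gpow_succ, <- gmul_assoc, IH. reflexivity.
  - rewrite gpow_pred, mul_cancel_r, <- gmul_assoc, IH, mul_cancel_l. reflexivity.
Qed.

Lemma comm_mul_l c g h : gmul c (gmul g h) = gmul (comm G c g) (gmul g (gmul c h)).
Proof. unfold comm. rewrite <- !gmul_assoc, !mul_cancel_l. reflexivity. Qed.

Lemma inv_comm_mul c g : gmul (ginv c) (gmul (comm G c g) g) = gmul g (ginv c).
Proof.
  unfold comm. rewrite <- !gmul_assoc, gmul_Vl, gmul_1r, mul_cancel_l. reflexivity.
Qed.

Definition iter_comm g s (i : nat) : G := Nat.iter i (fun t => comm G t g) s.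

Lemma iter_comm_lcs g s i : lcs G i (iter_comm g s i).
Proof.
  induction i as [|i IH]; simpl; [exact I|].
  apply gs_in. exists (iter_comm g s i), g. auto.
Qed.

End GroupFacts.

(** The Z-action k |-> f_g^k is expansive on U only if the G-action is: its orbits are
    contained in the G-orbits. *)
Lemma expansive_from_element (Omega : Type) (dist : Omega -> Omega -> R) (G : Group)
  (Phi : G -> Omega -> Omega) (g : G) (U : Omega -> Prop) :
  expansive_on dist Zgroup (fun k x => Phi (gpow G g k) x) U -> expansive_on dist G Phi U.
Proof.
  intros [Del [HDel Hexp]]. exists Del. split; [exact HDel|].
  intros x1 x2 U1 U2 Horb. apply Hexp; [exact U1 | exact U2 |].
  intro k. apply Horb.
Qed.

Section Action.
Variables (Omega : Type) (dist : Omega -> Omega -> R) (G : Group).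
Variable Phi : G -> Omega -> Omega.
Hypothesis Hmetric : is_metric dist.
Hypothesis Haction : is_action dist G Phi.

Lemma dist_refl x : dist x x = 0.
Proof. apply Hmetric. reflexivity. Qed.

Lemma dist_sym x y : dist x y = dist y x.
Proof. apply Hmetric. Qed.

Lemma dist_triangle x y z : dist x z <= dist x y + dist y z.
Proof. apply Hmetric. Qed.

Lemma act_one x : Phi gone x = x.
Proof. apply Haction. Qed.

Lemma act_mul a b x : Phi (gmul a b) x = Phi a (Phi b x).
Proof. apply Haction. Qed.

Lemma act_inv_l a x : Phi (ginv a) (Phi a x) = x.
Proof. rewrite <- act_mul, gmul_Vl, act_one. reflexivity. Qed.

Definition equivariant (F : G -> Omega) (a : G) : Prop :=
  forall h, F (gmul a h) = Phi a (F h).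

Lemma equivariant_one F : equivariant F gone.
Proof. intro h. rewrite gmul_1l, act_one. reflexivity. Qed.

Lemma equivariant_mul F a b :
  equivariant F a -> equivariant F b -> equivariant F (gmul a b).
Proof. intros Ha Hb h. rewrite <- gmul_assoc, Ha, Hb, act_mul. reflexivity. Qed.

Lemma equivariant_inv F a : equivariant F a -> equivariant F (ginv a).
Proof.
  intros Ha h. rewrite <- (mul_cancel_r G a h) at 2. rewrite Ha, act_inv_l. reflexivity.
Qed.

Lemma equivariant_gpow F a k : equivariant F a -> equivariant F (gpow G a k).
Proof.
  intro Ha.
  assert (Hn : forall n, equivariant F (npow G a n)).
  { induction n; simpl; [apply equivariant_one | apply equivariant_mul; assumption]. }
  destruct k; simpl; [apply equivariant_one | apply Hn | apply equivariant_inv, Hn].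
Qed.

Lemma equivariant_gen F (A : G -> Prop) x :
  (forall s, A s -> equivariant F s) -> gen_sub G A x -> equivariant F x.
Proof.
  intros HA Hx. induction Hx.
  - auto.
  - apply equivariant_one.
  - apply equivariant_mul; assumption.
  - apply equivariant_inv; assumption.
Qed.

Lemma unif_continuous_all :
  unif_continuous_action dist G Phi -> forall a, unif_continuous dist (Phi a).
Proof.
  intros [S' [Hsym [Hgen Huc]]] a.
  apply (gen_sub_symmetric_ind G S' (fun b => unif_continuous dist (Phi b))); [exact Hsym | | | exact Huc | apply Hgen].
  - intros e He. exists e. split; [exact He|]. intros u v H. rewrite !act_one. exact H.
  - intros b c Ub Uc e He.
    destruct (Ub e He) as [d1 [Hd1 H1]]. destruct (Uc d1 Hd1) as [d2 [Hd2 H2]].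
    exists d2. split; [exact Hd2|]. intros u v H. rewrite !act_mul. auto.
Qed.

Variable gens : list G.

Lemma pseudotrajectory_mono d d' y :
  d' <= d -> pseudotrajectory dist G gens Phi d' y -> pseudotrajectory dist G gens Phi d y.
Proof. intros Hd H s h Hs. specialize (H s h Hs). lra. Qed.

Definition tracks (y : G -> Omega) (a : G) (delta eta : R) : Prop :=
  forall u w, dist u (y w) < delta -> dist (Phi a u) (y (gmul a w)) < eta.

Definition trackable (a : G) : Prop :=
  forall eta, 0 < eta -> exists delta d, 0 < delta /\ 0 < d /\
    forall y, pseudotrajectory dist G gens Phi d y -> tracks y a delta eta.

Lemma trackable_one : trackable gone.
Proof.
  intros e He. exists e, 1. split; [exact He|]. split; [lra|].
  intros y _ u w H. rewrite act_one, gmul_1l. exact H.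
Qed.

Lemma trackable_mul a b : trackable a -> trackable b -> trackable (gmul a b).
Proof.
  intros Ta Tb e He.
  destruct (Ta e He) as [da [ka [Hda [Hka Ha]]]].
  destruct (Tb da Hda) as [db [kb [Hdb [Hkb Hb]]]].
  exists db, (Rmin ka kb). split; [exact Hdb|]. split; [apply Rmin_pos; assumption|].
  intros y Hy u w H. rewrite act_mul, <- gmul_assoc.
  apply Ha; [eapply pseudotrajectory_mono; [apply Rmin_l | exact Hy]|].
  apply Hb; [eapply pseudotrajectory_mono; [apply Rmin_r | exact Hy] | exact H].
Qed.

(** A generator is trackable: uniform continuity of f_s plus one pseudotrajectory step. *)
Lemma trackable_generator s :
  In s gens -> unif_continuous dist (Phi s) -> trackable s.
Proof.
  intros Hs Us e He. destruct (Us (e/2)) as [d1 [Hd1 H1]]; [lra|].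
  exists d1, (e/2). split; [exact Hd1|]. split; [lra|].
  intros y Hy u w H. specialize (H1 _ _ H). specialize (Hy s w Hs).
  rewrite dist_sym in Hy.
  pose proof (dist_triangle (Phi s u) (Phi s (y w)) (y (gmul s w))). lra.
Qed.

Hypothesis Hsym : symmetric_set G gens.
Hypothesis Hgen : generates G gens.

Lemma trackable_all : unif_continuous_action dist G Phi -> forall a, trackable a.
Proof.
  intros Huc a. apply (gen_sub_symmetric_ind G gens trackable); [exact Hsym | apply trackable_one
    | apply trackable_mul | | apply Hgen].
  intros s Hs. apply trackable_generator; [exact Hs | apply unif_continuous_all, Huc].
Qed.

Lemma trackable_list (L : list G) :
  (forall a, In a L -> trackable a) ->
  forall eta, 0 < eta -> exists delta d, 0 < delta /\ 0 < d /\
    forall y, pseudotrajectory dist G gens Phi d y -> forall a, In a L -> tracks y a delta eta.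
Proof.
  induction L as [|a L IH]; intros HL e He.
  - exists 1, 1. split; [lra|]. split; [lra|]. intros y _ a [].
  - destruct (HL a (or_introl eq_refl) e He) as [da [ka [Hda [Hka Ha]]]].
    destruct (IH (fun b Hb => HL b (or_intror Hb)) e He) as [db [kb [Hdb [Hkb Hb]]]].
    exists (Rmin da db), (Rmin ka kb).
    split; [apply Rmin_pos; assumption|]. split; [apply Rmin_pos; assumption|].
    intros y Hy b [<-|Hin] u w H.
    + apply Ha; [eapply pseudotrajectory_mono; [apply Rmin_l | exact Hy]|].
      eapply Rlt_le_trans; [exact H | apply Rmin_l].
    + apply Hb; [eapply pseudotrajectory_mono; [apply Rmin_r | exact Hy] | exact Hin |].
      eapply Rlt_le_trans; [exact H | apply Rmin_r].
Qed.

Section AnosovElement.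
Variable g : G.
Variables (U V : Omega -> Prop) (gam Del : R).
Hypothesis Hball : ball_subset dist gam V U.
Hypothesis Hexp : forall x1 x2, U x1 -> U x2 ->
  (forall k : Z, U (Phi (gpow G g k) x1) /\ U (Phi (gpow G g k) x2) /\
                 dist (Phi (gpow G g k) x1) (Phi (gpow G g k) x2) < Del) -> x1 = x2.

Definition shadows_along (y : G -> Omega) (h : G) (u : Omega) (r : R) : Prop :=
  forall k : Z, dist (y (gmul (gpow G g k) h)) (Phi (gpow G g k) u) < r.

Lemma shadows_along_here y h u r : shadows_along y h u r -> dist (y h) u < r.
Proof. intro H. specialize (H 0%Z). simpl in H. rewrite gmul_1l, act_one in H. exact H. Qed.

Lemma equivariant_shadows y F r :
  equivariant F g -> (forall h, dist (y h) (F h) < r) -> forall h, shadows_along y h (F h) r.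
Proof. intros HF Hclose h k. rewrite <- (equivariant_gpow F g k HF h). apply Hclose. Qed.

Lemma orbit_pseudotrajectory y delta eta h : 0 < delta ->
  tracks y g delta eta -> tracks y (ginv g) delta eta ->
  pseudotrajectory dist Zgroup [1%Z; (-1)%Z] (fun k x => Phi (gpow G g k) x) eta
    (fun k => y (gmul (gpow G g k) h)).
Proof.
  intros Hdelta Tg Tg' s k Hs. simpl in Hs.
  destruct Hs as [<-|[<-|[]]]; cbv beta; rewrite dist_sym.
  - change (@gmul Zgroup 1%Z k) with (1 + k)%Z.
    replace (1 + k)%Z with (Z.succ k) by lia. rewrite gpow_succ.
    change (gpow G g 1) with (gmul g gone). rewrite gmul_1r, <- gmul_assoc.
    apply Tg. rewrite dist_refl. exact Hdelta.
  - change (@gmul Zgroup (-1)%Z k) with (-1 + k)%Z.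
    replace (-1 + k)%Z with (Z.pred k) by lia. rewrite gpow_pred.
    change (gpow G g (-1)) with (ginv (gmul g gone)). rewrite gmul_1r, <- gmul_assoc.
    apply Tg'. rewrite dist_refl. exact Hdelta.
Qed.

Section FixedPseudotrajectory.
Variable y : G -> Omega.
Hypothesis HyV : forall h, V (y h).

(** Expansivity of f_g: a rho-shadowing point of a g-orbit sequence in V is unique when
    2 rho <= Del and the rho-neighbourhood of V lies in U. *)
Lemma shadow_unique rho h u w : rho <= gam -> rho <= Del / 2 ->
  shadows_along y h u rho -> shadows_along y h w rho -> u = w.
Proof.
  intros Hrg Hrd Hu Hw.
  assert (HU : forall p k, shadows_along y h p rho -> U (Phi (gpow G g k) p)).
  { intros p k Hp. apply (Hball (y (gmul (gpow G g k) h))); [apply HyV|].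
    specialize (Hp k). lra. }
  apply Hexp.
  - rewrite <- (act_one u). apply (HU u 0%Z Hu).
  - rewrite <- (act_one w). apply (HU w 0%Z Hw).
  - intro k. split; [apply HU, Hu|]. split; [apply HU, Hw|].
    specialize (Hu k). specialize (Hw k). rewrite dist_sym in Hu.
    pose proof (dist_triangle (Phi (gpow G g k) u) (y (gmul (gpow G g k) h))
                  (Phi (gpow G g k) w)). lra.
Qed.

Variables (x : G -> Omega) (eps1 rho : R).
Hypothesis Hx : forall h, shadows_along y h (x h) eps1.
Hypotheses (He1 : eps1 <= rho) (Hrg : rho <= gam) (Hrd : rho <= Del / 2).

Lemma shadow_mono h u : shadows_along y h u eps1 -> shadows_along y h u rho.
Proof. intros H k. specialize (H k). lra. Qed.

(** By uniqueness, the shadowing family is g-equivariant. *)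
Lemma shadowing_family_equivariant : equivariant x g.
Proof.
  intro h. apply (shadow_unique rho (gmul g h)); [exact Hrg | exact Hrd | |].
  - apply shadow_mono, Hx.
  - intro k. rewrite <- act_mul, gmul_assoc, gpow_comm, <- gpow_succ.
    apply shadow_mono, Hx.
Qed.

Lemma commutator_step c delta : eps1 <= delta -> tracks y (ginv c) delta rho ->
  equivariant x (comm G c g) -> equivariant x c.
Proof.
  intros Hdelta Tc Hcomm h.
  set (z := fun h => Phi (ginv c) (x (gmul c h))).
  assert (Hz : equivariant z g).
  { intro h'. unfold z.
    rewrite comm_mul_l, Hcomm, shadowing_family_equivariant, <- !act_mul,
      <- gmul_assoc, inv_comm_mul. reflexivity. }
  assert (Hzclose : forall h, dist (y h) (z h) < rho).
  { intro h'. unfold z. rewrite <- (mul_cancel_l G c h') at 1. rewrite dist_sym.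
    apply Tc. rewrite dist_sym. pose proof (shadows_along_here _ _ _ _ (Hx (gmul c h'))).
    lra. }
  assert (Ez : z h = x h).
  { apply (shadow_unique rho h); [exact Hrg | exact Hrd | |].
    - apply equivariant_shadows; assumption.
    - apply shadow_mono, Hx. }
  unfold z in Ez. rewrite <- Ez. rewrite <- (inv_inv G c) at 2. rewrite act_inv_l. reflexivity.
Qed.

(** Descending the chain of iterated commutators from the trivial one. *)
Lemma equivariant_generator s n delta : eps1 <= delta ->
  iter_comm G g s n = gone ->
  (forall i, (i <= n)%nat -> tracks y (ginv (iter_comm G g s i)) delta rho) ->
  equivariant x s.
Proof.
  intros Hdelta Htriv Htr.
  assert (Hdesc : forall m i, (i + m = n)%nat -> equivariant x (iter_comm G g s i)).
  { induction m as [|m IH]; intros i Hi.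
    - rewrite Nat.add_0_r in Hi. subst i. rewrite Htriv. apply equivariant_one.
    - apply (commutator_step _ delta); [exact Hdelta | apply Htr; lia |].
      apply (IH (S i)). lia. }
  apply (Hdesc n 0%nat). lia.
Qed.

(** Once the commutator chains of all generators are tracked, [x] is equivariant for the whole
    group, so the single point x(e) shadows [y]. *)
Lemma shadowing_point n delta : eps1 <= delta ->
  (forall s, In s gens -> iter_comm G g s n = gone) ->
  (forall s i, In s gens -> (i <= n)%nat -> tracks y (ginv (iter_comm G g s i)) delta rho) ->
  exists xe, forall h, dist (y h) (Phi h xe) < eps1.
Proof.
  intros Hdelta Htriv Htr.
  assert (Hxall : forall a, equivariant x a).
  { intro a. apply (equivariant_gen x (fun s => In s gens)); [|apply Hgen].
    intros s Hs. apply (equivariant_generator s n delta Hdelta (Htriv s Hs)).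
    intros i Hi. apply Htr; assumption. }
  exists (x gone). intro h. rewrite <- (Hxall h gone), gmul_1r.
  apply shadows_along_here, Hx.
Qed.

End FixedPseudotrajectory.

(** The precisions are chosen as
    rho = min(gam, Del/2) for uniqueness, eps1 <= rho for f_g-shadowing, and d so fine that the
    commutator chains and g^{+-1} are tracked; a shadowing point is chosen on every g-orbit. *)
Theorem shadowing_from_element :
  nilpotent G -> (forall a, trackable a) -> 0 < gam -> 0 < Del ->
  shadowing_on dist Zgroup [1%Z; (-1)%Z] (fun k x => Phi (gpow G g k) x) V ->
  shadowing_on dist G gens Phi V.
Proof.
  intros [n Hn] Htrack Hgam HDel Hsh eps Heps.
  set (rho := Rmin gam (Del / 2)).
  assert (Hrho : 0 < rho) by (apply Rmin_pos; lra).
  set (T := flat_map (fun s => map (fun i => ginv (iter_comm G g s i)) (seq 0 (S n))) gens).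
  destruct (trackable_list T (fun a _ => Htrack a) rho Hrho) as [dT [kT [HdT [HkT HT]]]].
  set (eps1 := Rmin eps (Rmin rho dT)).
  assert (He1 : 0 < eps1) by (repeat apply Rmin_pos; lra).
  destruct (Hsh eps1 He1) as [dZ [HdZ HZ]].
  destruct (trackable_list [g; ginv g] (fun a _ => Htrack a) dZ HdZ)
    as [dg [kg [Hdg [Hkg Hgg]]]].
  exists (Rmin kT kg). split; [apply Rmin_pos; assumption|]. intros y Hy HyV.
  assert (HyT := HT y (pseudotrajectory_mono _ _ _ (Rmin_l kT kg) Hy)).
  assert (Hyg := Hgg y (pseudotrajectory_mono _ _ _ (Rmin_r kT kg) Hy)).
  assert (Hshadow : forall h, exists u, shadows_along y h u eps1).
  { intro h. apply (HZ (fun k => y (gmul (gpow G g k) h))); [|intro; apply HyV].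
    apply (orbit_pseudotrajectory y dg); [exact Hdg | apply Hyg; simpl; tauto
      | apply Hyg; simpl; tauto]. }
  set (x := fun h => proj1_sig (constructive_indefinite_description _ (Hshadow h))).
  assert (Hx : forall h, shadows_along y h (x h) eps1)
    by (intro h; exact (proj2_sig (constructive_indefinite_description _ (Hshadow h)))).
  assert (Hrg : rho <= gam) by apply Rmin_l.
  assert (Hrd : rho <= Del / 2) by apply Rmin_r.
  assert (He1r : eps1 <= rho) by (eapply Rle_trans; [apply Rmin_r | apply Rmin_l]).
  assert (He1d : eps1 <= dT) by (eapply Rle_trans; [apply Rmin_r | apply Rmin_r]).
  destruct (shadowing_point y HyV x eps1 rho Hx He1r Hrg Hrd n dT He1d) as [xe Hxe].
  - intros s _. apply Hn, iter_comm_lcs.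
  - intros s i Hs Hi. apply HyT. apply in_flat_map. exists s. split; [exact Hs|].
    apply in_map_iff. exists i. split; [reflexivity | apply in_seq; lia].
  - exists xe. intro h. assert (He1e : eps1 <= eps) by apply Rmin_l.
    specialize (Hxe h). lra.
Qed.

End AnosovElement.
End Action.

Theorem lemma2 (G : Group) (Omega : Type) (dist : Omega -> Omega -> R)
  (Phi : G -> Omega -> Omega) (U V : Omega -> Prop) (S : list G) :
  is_metric dist ->
  nilpotent G ->
  finitely_generated G ->
  @symmetric_set G S -> @generates G S ->
  @is_action Omega dist G Phi ->
  @unif_continuous_action Omega dist G Phi ->
  (exists g : G, @homeo_topologically_Anosov Omega dist G Phi g U V) ->
  @topologically_Anosov Omega dist G S Phi U V.
Proof.
  intros Hmetric Hnil _ Hsym Hgen Haction Huc [g [[gam [Hgam Hball]] [Hsh HexpZ]]].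
  split; [exists gam; split; assumption|].
  split; [|exact (expansive_from_element _ _ _ _ g U HexpZ)].
  destruct HexpZ as [Del [HDel Hexp]].
  apply (shadowing_from_element Omega dist G Phi Hmetric Haction S Hgen g U V gam Del
           Hball Hexp); try assumption.
  exact (trackable_all Omega dist G Phi Hmetric Haction S Hsym Hgen Huc).
Qed.
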